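(* For every finite simple undirected graph $G$ and every nonnegative integer $k$, $\chi(\mathsf{TS}_k(G)) \leq \chi(J(\chi(G), k))$.
   Context: $\chi(H)$ is the chromatic number of $H$ (zero for the graph with no vertices). A $k$-clique is a set of $k$ pairwise adjacent vertices. $\mathsf{TS}_k(G)$ is the graph whose vertices are the $k$-cliques of $G$, two $k$-cliques $C, C'$ being adjacent iff there are vertices $u,v$ with $C \setminus C' = \{u\}$, $C' \setminus C = \{v\}$ and $uv \in E(G)$. The Johnson graph $J(n,k)$ has as vertices the $k$-element subsets of an $n$-element set, two being adjacent iff their intersection has exactly $k-1$ elements. *)

From mathcomp Require Import all_boot.
Set Implicit Arguments. Unset Strict Implicit. Unset Printing Implicit Defensive.

Definition colourable (V : finType) (adj : rel V) (c : nat) : bool :=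
  [exists f : {ffun V -> 'I_c}, [forall x, forall y, adj x y ==> (f x != f y)]].

(* Chromatic number: least c (<= #|V|) such that the graph is c-colourable.
   For loopless graphs such a c always exists (c = #|V|); the graph with no
   vertices has chromatic number 0. *)
Definition chi (V : finType) (adj : rel V) : nat :=
  find (colourable adj) (iota 0 #|V|.+1).

Definition simple_graph (T : finType) (e : rel T) : Prop :=
  symmetric e /\ irreflexive e.

Definition is_clique (T : finType) (e : rel T) (C : {set T}) : bool :=
  [forall x in C, forall y in C, (x != y) ==> e x y].

Definition kclique (T : finType) (e : rel T) (k : nat) (C : {set T}) : bool :=
  is_clique e C && (#|C| == k).

Definition TSvert (T : finType) (e : rel T) (k : nat) : finType :=
  {C : {set T} | kclique e k C}.

Definition TSadj (T : finType) (e : rel T) (k : nat) : rel (TSvert e k) :=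
  fun C C' => [exists u : T, exists v : T,
    [&& val C :\: val C' == [set u], val C' :\: val C == [set v] & e u v]].

Definition Jvert (n k : nat) : finType := {S : {set 'I_n} | #|S| == k}.

Definition Jadj (n k : nat) : rel (Jvert n k) :=
  fun S S' => #|val S :&: val S'|.+1 == k.

From mathcomp Require Import all_boot.

Set Implicit Arguments.
Unset Strict Implicit.
Unset Printing Implicit Defensive.

(* A proper colouring f of G with chi(G) colours sends every k-clique C
   injectively onto the k-set f(C) of colours.  If C and C' are adjacent in
   TS_k(G), then C :|: C' is a (k+1)-clique, so f is injective on it and
   f(C) :&: f(C') = f(C :&: C') has k - 1 elements.  Hence C |-> f(C) is a
   graph homomorphism TS_k(G) -> J(chi(G), k), and chromatic numbers do not
   decrease along graph homomorphisms. *)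

Section ChromaticNumber.

Variables (V : finType) (adj : rel V).

Lemma colourableP c :
  reflect (exists f : V -> 'I_c, forall x y, adj x y -> f x != f y)
          (colourable adj c).
Proof.
apply: (iffP existsP) => [[f /forallP fP] | [f fP]].
  by exists f => x y; move: (fP x) => /forallP/(_ y)/implyP.
exists [ffun x => f x]; apply/forallP=> x; apply/forallP=> y.
by apply/implyP=> /fP; rewrite !ffunE.
Qed.

Hypothesis adj_irr : irreflexive adj.

Lemma colourable_card : colourable adj #|V|.
Proof.
apply/colourableP; exists enum_rank => x y adj_xy.
by apply: contraTneq adj_xy => /enum_rank_inj ->; rewrite adj_irr.
Qed.

Lemma chi_colourable : colourable adj (chi adj).
Proof.
have has_col : has (colourable adj) (iota 0 #|V|.+1).
  apply/hasP; exists #|V|; last exact: colourable_card.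
  by rewrite mem_iota add0n ltnSn.
have := nth_find 0 has_col; rewrite nth_iota ?add0n //.
by rewrite -[X in _ < X](size_iota 0) -has_find.
Qed.

Lemma chi_min c : colourable adj c -> chi adj <= c.
Proof.
have chi_le d : colourable adj d -> d <= #|V| -> chi adj <= d.
  move=> col_d le_dV; rewrite leqNgt; apply: contraPN col_d => lt_d.
  by have := before_find 0 lt_d; rewrite nth_iota ?add0n // => ->.
move=> col_c; have [le_cV | lt_Vc] := leqP c #|V|; first exact: chi_le.
by apply: leq_trans (ltnW lt_Vc); apply: chi_le colourable_card _.
Qed.

End ChromaticNumber.

Section Homomorphism.

Variables (V W : finType) (adjV : rel V) (adjW : rel W) (h : V -> W).
Hypothesis h_hom : {homo h : x y / adjV x y >-> adjW x y}.

Lemma colourable_hom c : colourable adjW c -> colourable adjV c.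
Proof.
move=> /colourableP[f f_proper]; apply/colourableP.
by exists (f \o h) => x y /h_hom /f_proper.
Qed.

Lemma chi_hom : irreflexive adjW -> chi adjV <= chi adjW.
Proof.
move=> adjW_irr; have adjV_irr : irreflexive adjV.
  by move=> x; apply: contraFF (adjW_irr (h x)) => /h_hom.
exact/chi_min/colourable_hom/chi_colourable.
Qed.

End Homomorphism.

Lemma Jadj_irreflexive n k : irreflexive (@Jadj n k).
Proof. by move=> S; rewrite /Jadj setIid (eqP (valP S)) eqn_leq ltnn. Qed.

Section TokenSliding.

Variables (T : finType) (e : rel T).

Lemma is_cliqueP (C : {set T}) :
  reflect {in C &, forall x y, x != y -> e x y} (is_clique e C).
Proof.
apply: (iffP forall_inP) => [clC x y xC yC | clC x xC].
  by move: (clC x xC) => /forall_inP/(_ y yC)/implyP.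
by apply/forall_inP=> y yC; apply/implyP; apply: clC.
Qed.

Lemma proper_colouring_inj_clique c (f : T -> 'I_c) (C : {set T}) :
  (forall x y, e x y -> f x != f y) -> is_clique e C -> {in C &, injective f}.
Proof.
move=> f_proper /is_cliqueP clC x y xC yC fxy; apply: contraTeq isT => neq_xy.
by have := f_proper _ _ (clC x y xC yC neq_xy); rewrite fxy eqxx.
Qed.

Variable k : nat.

Lemma TSvert_clique (C : TSvert e k) : is_clique e (val C).
Proof. by case/andP: (valP C). Qed.

Lemma TSvert_card (C : TSvert e k) : #|val C| = k.
Proof. by case/andP: (valP C) => _ /eqP. Qed.

Lemma TSadj_card_setI (C C' : TSvert e k) :
  @TSadj T e k C C' -> #|val C :&: val C'|.+1 = k.
Proof.
case/existsP=> u /existsP[v /and3P[/eqP CDC' _ _]].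
by rewrite -addn1 -(cards1 u) -CDC' cardsID TSvert_card.
Qed.

Hypothesis e_sym : symmetric e.

Lemma TSadj_cliqueU (C C' : TSvert e k) :
  @TSadj T e k C C' -> is_clique e (val C :|: val C').
Proof.
case/existsP=> u /existsP[v /and3P[/eqP CDC' /eqP C'DC e_uv]].
have cross a b : a \in val C :\: val C' -> b \in val C' :\: val C -> e a b.
  by rewrite CDC' C'DC => /set1P-> /set1P->.
have /is_cliqueP clC := TSvert_clique C.
have /is_cliqueP clC' := TSvert_clique C'.
apply/is_cliqueP=> x y xCC' yCC' neq_xy.
have [xC' | xNC'] := boolP (x \in val C');
  have [yC' | yNC'] := boolP (y \in val C').
- exact: clC'.
- have yC : y \in val C by case/setUP: yCC' => //; rewrite (negPf yNC').
  have [xC | xNC] := boolP (x \in val C); first exact: clC.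
  by rewrite e_sym; apply: cross; rewrite inE ?yNC' ?xNC.
- have xC : x \in val C by case/setUP: xCC' => //; rewrite (negPf xNC').
  have [yC | yNC] := boolP (y \in val C); first exact: clC.
  by apply: cross; rewrite inE ?xNC' ?yNC.
- by apply: clC => //; [case/setUP: xCC' | case/setUP: yCC'];
     rewrite ?(negPf xNC') ?(negPf yNC').
Qed.

Variables (c : nat) (f : T -> 'I_c).
Hypothesis f_proper : forall x y, e x y -> f x != f y.

Lemma card_clique_colours (C : TSvert e k) : #|f @: val C| == k.
Proof.
rewrite card_in_imset ?TSvert_card //.
exact/proper_colouring_inj_clique/TSvert_clique.
Qed.

Definition clique_colours (C : TSvert e k) : Jvert c k :=
  Sub (f @: val C) (card_clique_colours C).

Lemma clique_colours_hom :
  {homo clique_colours : C C' / @TSadj T e k C C' >-> @Jadj c k C C'}.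
Proof.
move=> C C' adjCC'.
have injCC' := proper_colouring_inj_clique f_proper (TSadj_cliqueU adjCC').
rewrite /Jadj /= -imsetI => [|x y xC yC']; last first.
  by apply: injCC'; rewrite inE ?xC ?yC' ?orbT.
rewrite card_in_imset ?TSadj_card_setI // => x y /setIP[xC _] /setIP[yC _].
by apply: injCC'; rewrite inE ?xC ?yC.
Qed.

End TokenSliding.

Theorem proposition3p3 (T : finType) (e : rel T) (k : nat) :
  simple_graph e ->
  chi (@TSadj T e k) <= chi (@Jadj (chi e) k).
Proof.
case=> e_sym e_irr.
have /colourableP[f f_proper] := chi_colourable e_irr.
exact: chi_hom (clique_colours_hom e_sym f_proper) (@Jadj_irreflexive _ k).
Qed.
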